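(* Let $\phi$ be a germ at the origin of a function $\mathbb{R}^3\to\mathbb{R}$ with an isolated critical point at the origin, of corank 2 (the Hessian of $\phi$ at the origin has exactly two zero eigenvalues). Then $\phi$ is not a Beltrami singularity.
   Context: $\phi$ is a Beltrami singularity if there is a germ of a 1-form $\nu$ such that $\eta=d\phi+\nu$ is a singular contact form (a 1-form vanishing exactly at isolated points with $\eta\wedge d\eta\neq0$ elsewhere) and there exists a Riemannian metric $g$ with $\star_g\eta=d\eta$. The corank does not depend on the representative of the equivalence class of the germ (germs $\phi,\psi$ equivalent if $\psi=f\circ\phi\circ h^{-1}$ for germs of diffeomorphisms $f$ of $\mathbb{R}$, $h$ of $\mathbb{R}^3$ fixing the origin). *)

From Stdlib Require Import Reals.
From Coquelicot Require Derive.
From mathcomp Require Import all_boot all_algebra.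
From mathcomp Require Import Rstruct.

Set Implicit Arguments.
Unset Strict Implicit.
Unset Printing Implicit Defensive.

Import GRing.Theory.
Local Open Scope ring_scope.

Definition pt := 'I_3 -> R.

Definition origin : pt := fun _ => 0.

Definition dist3 (p q : pt) : R :=
  R_sqrt.sqrt (\sum_(i < 3) (p i - q i) ^+ 2).

Definition move (p : pt) (i : 'I_3) (t : R) : pt :=
  fun j => if j == i then p j + t else p j.

Definition pd (i : 'I_3) (f : pt -> R) : pt -> R :=
  fun p => Derive.Derive (fun t : R => f (move p i t)) 0%R.
Definition ex_pd (i : 'I_3) (f : pt -> R) (p : pt) : Prop :=
  Derive.ex_derive (K := Hierarchy.R_AbsRing) (V := Hierarchy.R_NormedModule) (fun t : R => f (move p i t)) 0%R.

Fixpoint iter_pd (l : seq 'I_3) (f : pt -> R) : pt -> R :=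
  match l with
  | [::] => f
  | i :: l' => pd i (iter_pd l' f)
  end.

Definition ball0 (r : R) (p : pt) : Prop := (dist3 p origin < r)%R.

Definition continuous_at3 (f : pt -> R) (p : pt) : Prop :=
  forall eps : R, (0 < eps)%R -> exists delta : R, (0 < delta)%R /\
    forall q, (dist3 q p < delta)%R -> (Rabs (f q - f p) < eps)%R.

Definition smooth_on_ball (r : R) (f : pt -> R) : Prop :=
  forall (l : seq 'I_3) (p : pt), ball0 r p ->
    continuous_at3 (iter_pd l f) p /\ forall i, ex_pd i (iter_pd l f) p.

Definition smooth_germ (f : pt -> R) : Prop :=
  exists r : R, (0 < r)%R /\ smooth_on_ball r f.

(* 1-forms on R^3: eta = sum_i (eta i) dx_i ;
   2-forms: omega = (1/2) sum_{i,j} (omega i j) dx_i /\ dx_j  (antisymmetric). *)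
Definition form1 := 'I_3 -> pt -> R.
Definition form2 := 'I_3 -> 'I_3 -> pt -> R.

Definition exact1 (phi : pt -> R) : form1 := fun i => pd i phi.
Definition add1 (a b : form1) : form1 := fun i p => a i p + b i p.

Definition dform1 (eta : form1) : form2 :=
  fun i j p => pd i (eta j) p - pd j (eta i) p.

Definition i0 : 'I_3 := @Ordinal 3 0 isT.
Definition i1 : 'I_3 := @Ordinal 3 1 isT.
Definition i2 : 'I_3 := @Ordinal 3 2 isT.

(* coefficient of dx_0/\dx_1/\dx_2 in eta /\ omega *)
Definition wedge12 (eta : form1) (om : form2) (p : pt) : R :=
  eta i0 p * om i1 i2 p - eta i1 p * om i0 i2 p + eta i2 p * om i0 i1 p.

Definition levi (i j k : 'I_3) : R :=
  match nat_of_ord i, nat_of_ord j, nat_of_ord k with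
  | 0%N, 1%N, 2%N | 1%N, 2%N, 0%N | 2%N, 0%N, 1%N => 1
  | 0%N, 2%N, 1%N | 2%N, 1%N, 0%N | 1%N, 0%N, 2%N => -1
  | _, _, _ => 0
  end.

Definition metric := pt -> 'M[R]_3.

Definition hodge1 (g : metric) (eta : form1) : form2 :=
  fun j k p => R_sqrt.sqrt (\det (g p)) *
    \sum_(l < 3) \sum_(m < 3) levi l j k * (invmx (g p)) l m * eta m p.

Definition riem_metric_on (r : R) (g : metric) : Prop :=
  (forall i j, smooth_on_ball r (fun p => g p i j)) /\
  (forall p, ball0 r p ->
     (g p)^T = g p /\
     forall v : 'cV[R]_3, v != 0 -> 0 < ((v^T *m g p *m v) 0 0)).

Definition zero1 (eta : form1) (p : pt) : Prop := forall i, eta i p = 0.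

Definition singular_contact_on (r : R) (eta : form1) : Prop :=
  (forall i, smooth_on_ball r (eta i)) /\
  (forall p, ball0 r p -> zero1 eta p ->
     exists delta : R, (0 < delta)%R /\
       forall q, ball0 r q -> (0 < dist3 q p < delta)%R -> ~ zero1 eta q) /\
  (forall p, ball0 r p -> ~ zero1 eta p -> wedge12 eta (dform1 eta) p <> 0).

Definition beltrami_singularity (phi : pt -> R) : Prop :=
  exists (nu : form1) (g : metric) (r : R), (0 < r)%R /\
    (forall i, smooth_on_ball r (nu i)) /\
    (forall i, nu i origin = 0) /\
    (forall i j, pd j (nu i) origin = 0) /\
    riem_metric_on r g /\
    singular_contact_on r (add1 (exact1 phi) nu) /\
    (forall p, ball0 r p -> forall j k,
        hodge1 g (add1 (exact1 phi) nu) j k p =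
        dform1 (add1 (exact1 phi) nu) j k p).

Definition isolated_critical_point0 (phi : pt -> R) : Prop :=
  (forall i, pd i phi origin = 0) /\
  exists r : R, (0 < r)%R /\
    forall p, ball0 r p -> p <> origin -> exists i, pd i phi p <> 0.

Definition hessian0 (phi : pt -> R) : 'M[R]_3 :=
  \matrix_(i, j) pd i (pd j phi) origin.

Definition corank0 (phi : pt -> R) : nat := (3 - \rank (hessian0 phi))%N.

(* If eta = d phi + nu satisfies star_g eta = d eta, then d (star_g eta) = d d eta = 0.
   Since eta vanishes at the origin, d (star_g eta) there equals
   sqrt (det g) * tr (g^-1 D eta) (only the continuity of g enters, as the
   coefficients of star_g multiply a form vanishing at 0), and D eta (0) is the
   Hessian H of phi, because nu has vanishing 1-jet.
   Corank 2 makes H a symmetric matrix of rank one, H = +-a a^T, hence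
   tr (g^-1 H) = +-a^T g^-1 a is nonzero since g is positive definite. *)

From Pilot Require Import Defs.
From Stdlib Require Import Reals Lra FunctionalExtensionality.
From Coquelicot Require Import Coquelicot.
From mathcomp Require Import all_boot all_order all_algebra Rstruct.
From mathcomp Require ring.

Set Implicit Arguments.
Unset Strict Implicit.
Unset Printing Implicit Defensive.

Import Order.TTheory GRing.Theory Num.Theory.

Section PositiveDefinite.
Import mathcomp.algebra_tactics.ring.
Local Open Scope ring_scope.
Variable F : realFieldType.

Definition posdefmx n (A : 'M[F]_n) : Prop :=
  forall v : 'cV[F]_n, v != 0 -> 0 < (v^T *m A *m v) 0 0.

Lemma posdefmx_drsubmx m n (A : 'M[F]_(m + n)) :
  posdefmx A -> posdefmx (drsubmx A).
Proof.
move=> PA u u0.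
have v0 : col_mx (0 : 'cV_m) u != 0.
  by apply: contraNneq u0; rewrite -col_mx0 => /eq_col_mx[_ ->].
move: (PA _ v0); rewrite -{1}[A]submxK tr_col_mx mul_row_block mul_row_col.
by rewrite linear0 trmx0 mul0mx !add0r.
Qed.

Lemma cofactor00_drsubmx n (A : 'M[F]_(1 + n)) : cofactor A 0 0 = \det (drsubmx A).
Proof.
rewrite /cofactor addn0 expr0 mul1r; congr (\det _).
by apply/matrixP => i j; rewrite !mxE; congr (A _ _); apply: val_inj.
Qed.

Lemma posdefmx_det_gt0 n (A : 'M[F]_n) : posdefmx A -> 0 < \det A.
Proof.
elim: n A => [|n IHn] A PA; first by rewrite det_mx00 ltr01.
have minor_gt0 : 0 < cofactor A 0 0.
  by rewrite (cofactor00_drsubmx A); apply: IHn; apply: (posdefmx_drsubmx (m := 1)).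
(* Since A w = det A *: e_0, the quadratic form at w is det A * cofactor A 0 0. *)
pose w : 'cV_n.+1 := \adj A *m delta_mx 0 0.
have w00 : w 0 0 = cofactor A 0 0 by rewrite /w -colE !mxE.
have w_neq0 : w != 0.
  by apply: contraTneq minor_gt0 => w0; rewrite -w00 w0 mxE ltxx.
have Aw : A *m w = \det A *: delta_mx 0 0 by rewrite mulmxA mul_mx_adj mul_scalar_mx.
have := PA w w_neq0.
by rewrite -mulmxA Aw -scalemxAr -colE 3!mxE w00 pmulr_lgt0.
Qed.

Lemma posdefmx_unitmx n (A : 'M[F]_n) : posdefmx A -> A \in unitmx.
Proof. by move=> /posdefmx_det_gt0 detA; rewrite unitmxE unitfE gt_eqF. Qed.

Lemma rank1_sym_pivot n (H : 'M[F]_n) : H^T = H -> \rank H = 1%N ->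
  exists2 k, H k k != 0 & forall i j, H i j * H k k = H i k * H j k.
Proof.
move=> HT rkH; have Hsym i j : H j i = H i j by rewrite -{1}HT mxE.
have [a [b Hab]] : exists a b, forall i j, H i j = a i * b j.
  move: (mulmx_base H); move: (col_base H) (row_base H); rewrite rkH => cb rb <-.
  by exists (cb^~ 0), (rb 0) => i j; rewrite mxE big_ord1.
have [k Hkk | diag0] := pickP (fun k => H k k != 0).
  by exists k => // i j; rewrite (Hsym k j) !Hab; ring.
suff H0 : H = 0 by move: rkH; rewrite H0 mxrank0.
apply/matrixP => i j; rewrite mxE; apply/eqP; rewrite -sqrf_eq0 expr2.
rewrite [X in _ * X]Hsym !Hab.
have -> : a i * b j * (a j * b i) = (a i * b i) * (a j * b j) by ring.
by rewrite -!Hab (eqP (negbFE (diag0 i))) mul0r.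
Qed.

Lemma tr_invmx_rank1_neq0 n (G H : 'M[F]_n) :
  posdefmx G -> H^T = H -> \rank H = 1%N -> \tr (invmx G *m H) != 0.
Proof.
move=> PG HT rkH; have [k Hkk Hpiv] := rank1_sym_pivot HT rkH.
have Gu := posdefmx_unitmx PG.
(* The pivot identity turns H k k * tr (G^-1 H) into the quadratic form of G at w. *)
pose w := invmx G *m col k H.
have w_neq0 : w != 0.
  apply: contraNneq Hkk => w0; have := mulKVmx Gu (col k H).
  by rewrite -/w w0 mulmx0 => /matrixP/(_ k 0); rewrite !mxE => <-.
have := PG w w_neq0; apply: contraTneq => tr0.
suff -> : (w^T *m G *m w) 0 0 = \tr (invmx G *m H) * H k k by rewrite tr0 mul0r ltxx.
rewrite trmx_mul -!mulmxA mulKVmx // mxE /mxtrace mulr_suml.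
under eq_bigr do rewrite !mxE big_distrr; rewrite exchange_big.
apply: eq_bigr => l _; rewrite !mxE big_distrl; apply: eq_bigr => m _.
rewrite !mxE /= -mulrA Hpiv; ring.
Qed.
End PositiveDefinite.

Local Open Scope R_scope.

Lemma sum_ord3 (V : nmodType) (F : 'I_3 -> V) : (\sum_(i < 3) F i = F i0 + F i1 + F i2)%R.
Proof.
rewrite !big_ord_recl big_ord0 addr0 addrA.
by repeat f_equal; apply: val_inj.
Qed.

Lemma move0 p i : move p i 0 = p.
Proof.
by apply: functional_extensionality => j; rewrite /move; case: eqP => // ->; rewrite addr0.
Qed.

Lemma move_move p i u v : move (move p i u) i v = move p i (u + v).
Proof.
by apply: functional_extensionality => j; rewrite /move; case: eqP => // _; rewrite addrA.
Qed.

Lemma moveC p i j u v : i != j -> move (move p i u) j v = move (move p j v) i u.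
Proof.
move=> ij; apply: functional_extensionality => k; rewrite /move.
by case: (eqVneq k i) => [->|//]; rewrite (negbTE ij).
Qed.

Lemma dist3_le p q d : (forall k, Rabs (q k - p k) <= d) -> dist3 q p <= 2 * d.
Proof.
move=> H; have := H i0; have := H i1; have := H i2.
rewrite /dist3 sum_ord3 !expr2 -!RmultE -!RminusE -!RplusE.
set a := q i0 - p i0; set b := q i1 - p i1; set c := q i2 - p i2 => hc hb ha.
have d0 : 0 <= d by apply: Rle_trans (Rabs_pos _) ha.
rewrite -[2 * d]sqrt_square; last lra.
apply: sqrt_le_1_alt.
have sq x : x * x = Rabs x * Rabs x by rewrite -Rabs_mult Rabs_pos_eq; nra.
have := Rabs_pos a; have := Rabs_pos b; have := Rabs_pos c.
rewrite (sq a) (sq b) (sq c); nra.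
Qed.

Lemma dist3_move p i t : dist3 (move p i t) p <= 2 * Rabs t.
Proof.
apply: dist3_le => k; have := Rabs_pos t; rewrite /move; case: (k == i) => t0.
- by rewrite -RplusE (_ : p k + t - p k = t); [lra | ring].
- by rewrite Rminus_diag Rabs_R0; lra.
Qed.

Lemma dist3_move2 i j u v :
  dist3 (move (move origin i u) j v) origin <= 2 * (Rabs u + Rabs v).
Proof.
apply: dist3_le => k; rewrite /move /origin.
have := Rabs_pos u; have := Rabs_pos v; have := Rabs_triang u v.
case: (k == j); case: (k == i); rewrite /= -?RplusE -?RminusE -?R0E;
  rewrite ?Rplus_0_l ?Rminus_0_r ?Rabs_R0; lra.
Qed.

Lemma ball0_origin r : 0 < r -> ball0 r origin.
Proof.
move=> r0; rewrite /ball0 /dist3; apply/RltP.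
have -> : (\sum_(i < 3) (origin i - origin i) ^+ 2)%R = 0.
  by rewrite big1 // => i _; rewrite subrr expr0n.
by rewrite sqrt_0.
Qed.

Lemma pd_move i f p u : pd i f (move p i u) = Derive (fun s => f (move p i s)) u.
Proof.
have /= := Derive_n_comp_trans (fun s => f (move p i s)) 1 0 u.
rewrite Rplus_0_l => <-; apply: Derive_ext => t.
by rewrite move_move Rplus_comm.
Qed.

Lemma ex_pd_move i f p u :
  ex_pd i f (move p i u) -> ex_derive (fun s => f (move p i s)) u.
Proof.
move=> H; have := ex_derive_n_comp_trans (fun t => f (move (move p i u) i t)) 1 u (- u).
rewrite Rplus_opp_r => /(_ H); apply: ex_derive_ext => s /=.
by rewrite move_move; congr (f (move p i _)); ring.
Qed.

Definition slice (f : pt -> R) (i j : 'I_3) (u v : R) : R :=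
  f (move (move origin i u) j v).

Section Slice.
Variables (f : pt -> R) (i j : 'I_3).
Hypothesis ij : i != j.

Lemma sliceC u v : slice f i j u v = slice f j i v u.
Proof. by rewrite /slice moveC. Qed.

Lemma Derive_slice z v :
  Derive (fun t => slice f i j z t) v = pd j f (move (move origin j v) i z).
Proof. by rewrite moveC 1?eq_sym // pd_move. Qed.

Lemma Derive2_slice u v :
  Derive (fun z => Derive (fun t => slice f i j z t) v) u =
  pd i (pd j f) (move (move origin i u) j v).
Proof.
rewrite moveC // pd_move; apply: Derive_ext => z; exact: Derive_slice.
Qed.

Lemma ex_derive_slice u v :
  ex_pd i f (move (move origin i u) j v) -> ex_derive (fun z => slice f i j z v) u.
Proof.
rewrite moveC // => /ex_pd_move; apply: ex_derive_ext => z; by rewrite /slice [in RHS]moveC.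
Qed.

Lemma ex_derive_Derive_slice u v :
  ex_pd i (pd j f) (move (move origin i u) j v) ->
  ex_derive (fun z => Derive (fun t => slice f i j z t) v) u.
Proof.
rewrite moveC // => /ex_pd_move; apply: ex_derive_ext => z; by rewrite Derive_slice.
Qed.
End Slice.

Lemma locally_2d_ball0 r i j : 0 < r ->
  locally_2d (fun u v => ball0 r (move (move origin i u) j v)) 0 0.
Proof.
move=> r0; have r4 : 0 < r / 4 by lra.
exists (mkposreal _ r4) => u v /=; rewrite !Rminus_0_r => hu hv.
by apply/RltP; have := dist3_move2 i j u v; lra.
Qed.

Lemma continuity_2d_pt_slice h i j : continuous_at3 h origin ->
  continuity_2d_pt (slice h i j) 0 0.
Proof.
move=> H eps; have /RltP eps0 := cond_pos eps.
have [d [/RltP d0 Hd]] := H eps eps0.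
have d4 : 0 < d / 4 by rewrite -R0E in d0; lra.
exists (mkposreal _ d4) => u v /=; rewrite !Rminus_0_r => hu hv.
rewrite /slice !move0; apply/RltP/Hd/RltP.
have := dist3_move2 i j u v; lra.
Qed.

Lemma pd_pdC_origin r f i j : 0 < r -> smooth_on_ball r f ->
  pd i (pd j f) origin = pd j (pd i f) origin.
Proof.
move=> r0 Sf; case: (eqVneq i j) => [-> // | ij]; have ji : j != i by rewrite eq_sym.
have -> : pd j (pd i f) origin = Derive (fun z => Derive (fun t => slice f i j t z) 0) 0.
  by apply: Derive_ext => z; apply: Derive_ext => t; rewrite sliceC.
apply: (Schwarz (slice f i j)).
- apply: locally_2d_impl (locally_2d_ball0 i j r0); apply: locally_2d_forall => u v B.
  have B' : ball0 r (move (move origin j v) i u) by rewrite moveC.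
  split; [|split; [|split]].
  + exact/ex_derive_slice/((Sf [::] _ B).2 i).
  + apply: (ex_derive_ext (fun z => slice f j i z u)) => [z|]; first exact: sliceC.
    exact/ex_derive_slice/((Sf [::] _ B').2 j).
  + exact/ex_derive_Derive_slice/((Sf [:: j] _ B).2 i).
  + apply: (ex_derive_ext (fun z => Derive (fun t => slice f j i z t) u)) => [z|].
      by apply: Derive_ext => t; rewrite sliceC.
    exact/ex_derive_Derive_slice/((Sf [:: i] _ B').2 j).
- apply: continuity_2d_pt_ext (fun u v => esym (Derive2_slice f ij u v)) _.
  exact/continuity_2d_pt_slice/(Sf [:: i; j] _ (ball0_origin r0)).1.
- have E u v : slice (pd j (pd i f)) i j u v =
               Derive (fun z => Derive (fun t => slice f i j t z) u) v.
    rewrite {1}/slice moveC // -(Derive2_slice f ji).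
    by apply: Derive_ext => z; apply: Derive_ext => t; rewrite sliceC.
  apply: continuity_2d_pt_ext E _.
  exact/continuity_2d_pt_slice/(Sf [:: j; i] _ (ball0_origin r0)).1.
Qed.

Lemma is_derive_mult_vanishing (c e : R -> R) x de :
  continuity_pt c x -> is_derive e x de -> e x = 0 ->
  is_derive (fun t => c t * e t) x (c x * de).
Proof.
move=> Cc /is_derive_Reals/uniqueness_step2 De ex0.
apply/is_derive_Reals/uniqueness_step3.
have Lc : limit1_in (fun h => c (x + h)) (fun h => h <> 0) (c x) 0.
  move=> eps /Cc [a [a0 Ha]]; exists a; split => // h [h0 ha]; apply: Ha.
  rewrite /= /R_dist Rminus_0_r in ha *; rewrite Rplus_minus_l.
  by split => //; split => //; lra.
have -> : (fun h => (c (x + h) * e (x + h) - c x * e x) / h) =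
          (fun h => c (x + h) * ((e (x + h) - e x) / h)).
  by apply: functional_extensionality => h; rewrite ex0 /Rdiv; ring.
exact: limit_mul Lc De.
Qed.

Lemma continuity_pt_sum (I : Type) (r : seq I) (P : pred I) (F : I -> R -> R) x :
  (forall i, P i -> continuity_pt (F i) x) ->
  continuity_pt (fun t => \sum_(i <- r | P i) F i t)%R x.
Proof.
move=> FC; elim: r => [|a r IH].
  apply: (continuity_pt_ext (fun _ => 0)) => [t|]; first by rewrite big_nil.
  by apply: continuity_pt_const => ? ?.
apply: (continuity_pt_ext
  (fun t => (if P a then F a t else 0) + (\sum_(i <- r | P i) F i t)%R)) => [t|].
  by rewrite big_cons; case: (P a); rewrite ?Rplus_0_l.
apply: continuity_pt_plus IH; case: (boolP (P a)) => Pa; first exact: FC.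
by apply: continuity_pt_const => ? ?.
Qed.

Lemma continuity_pt_prod (I : Type) (r : seq I) (P : pred I) (F : I -> R -> R) x :
  (forall i, P i -> continuity_pt (F i) x) ->
  continuity_pt (fun t => \prod_(i <- r | P i) F i t)%R x.
Proof.
move=> FC; elim: r => [|a r IH].
  apply: (continuity_pt_ext (fun _ => 1)) => [t|]; first by rewrite big_nil.
  by apply: continuity_pt_const => ? ?.
apply: (continuity_pt_ext
  (fun t => (if P a then F a t else 1) * (\prod_(i <- r | P i) F i t)%R)) => [t|].
  by rewrite big_cons; case: (P a); rewrite ?Rmult_1_l.
apply: continuity_pt_mult IH; case: (boolP (P a)) => Pa; first exact: FC.
by apply: continuity_pt_const => ? ?.
Qed.

Lemma continuity_pt_det n (M : R -> 'M[R]_n) x :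
  (forall i j, continuity_pt (fun t => M t i j) x) ->
  continuity_pt (fun t => \det (M t))%R x.
Proof.
move=> MC; apply: continuity_pt_sum => s _; apply: continuity_pt_mult.
  by apply: continuity_pt_const => ? ?.
exact: continuity_pt_prod.
Qed.

Lemma continuity_pt_adj n (M : R -> 'M[R]_n) x :
  (forall i j, continuity_pt (fun t => M t i j) x) ->
  forall i j, continuity_pt (fun t => \adj (M t) i j)%R x.
Proof.
move=> MC i j.
apply: (continuity_pt_ext (fun t => (-1) ^+ (j + i) * \det (row' j (col' i (M t))))%R) => [t|].
  by rewrite mxE.
apply: continuity_pt_mult; first by apply: continuity_pt_const => ? ?.
apply: continuity_pt_det => a b.
by apply: (continuity_pt_ext (fun t => M t (lift j a) (lift i b))) => [t|]; rewrite ?mxE.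
Qed.

Lemma continuity_pt_invmx n (M : R -> 'M[R]_n) x :
  (forall i j, continuity_pt (fun t => M t i j) x) -> (\det (M x))%R <> 0 ->
  forall i j, continuity_pt (fun t => invmx (M t) i j) x.
Proof.
move=> MC det0 i j; have Cdet := continuity_pt_det MC.
have [a [a0 Ha]] := Cdet _ (Rabs_pos_lt _ det0).
apply: (continuity_pt_locally_ext (fun t => / (\det (M t))%R * (\adj (M t))%R i j) _ a x a0).
  move=> y yx; have dety : (\det (M y))%R <> 0.
    case: (Req_dec y x) => [-> // | /nesym ynx] dety0.
    have := Ha y (conj (conj I ynx) yx); rewrite /= /R_dist dety0 Rminus_0_l Rabs_Ropp.
    exact: Rlt_irrefl.
  have U : M y \in unitmx by rewrite unitmxE unitfE; apply/eqP.
  by rewrite /invmx U [in RHS]mxE.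
apply: continuity_pt_mult; last exact: continuity_pt_adj.
exact: continuity_pt_inv Cdet det0.
Qed.

Lemma continuity_pt_move h p i : continuous_at3 h p ->
  continuity_pt (fun t => h (move p i t)) 0.
Proof.
move=> H eps /RltP/H [d [/RltP d0 Hd]]; rewrite -R0E in d0.
exists (d / 2); split; first lra.
move=> t [_ ht]; rewrite /= /R_dist Rminus_0_r in ht *.
rewrite move0; apply/RltP/Hd/RltP.
have := dist3_move p i t; lra.
Qed.

Lemma is_derive_sum (I : Type) (r : seq I) (F : I -> R -> R) (dF : I -> R) x :
  (forall i, is_derive (F i) x (dF i)) ->
  is_derive (fun t => \sum_(i <- r) F i t)%R x (\sum_(i <- r) dF i)%R.
Proof.
move=> FD; elim: r => [|a r IH].
  apply: (is_derive_ext (fun _ => 0)) => [t|]; first by rewrite big_nil.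
  by rewrite big_nil; apply: is_derive_const.
apply: (is_derive_ext (fun t => F a t + (\sum_(i <- r) F i t)%R)) => [t|].
  by rewrite big_cons.
by rewrite big_cons; apply: is_derive_plus.
Qed.

(* Bare [form1] and [form2] would denote Stdlib's trigonometric lemmas. *)
Section HodgeStar.
Import mathcomp.algebra_tactics.ring.
Local Open Scope ring_scope.

Definition hodge_coef (g : metric) (j k m : 'I_3) (p : pt) : R :=
  (sqrt (\det (g p)) * \sum_(l < 3) levi l j k * invmx (g p) l m)%R.

Lemma hodge1E g eta j k p :
  hodge1 g eta j k p = \sum_(m < 3) hodge_coef g j k m p * eta m p.
Proof.
rewrite /hodge1 exchange_big mulr_sumr; apply: eq_bigr => m _.
by rewrite -mulrA mulr_suml.
Qed.

Lemma continuity_pt_hodge_coef (g : metric) j k m (gamma : R -> pt) x :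
  (forall a b, continuity_pt (fun t => g (gamma t) a b) x) -> 0 < \det (g (gamma x)) ->
  continuity_pt (fun t => hodge_coef g j k m (gamma t)) x.
Proof.
move=> Gc det_gt0; apply: continuity_pt_mult.
  apply: (continuity_pt_comp (fun t => \det (g (gamma t)))); first exact: continuity_pt_det.
  by apply/continuity_pt_sqrt/RleP/ltW.
apply: continuity_pt_sum => l _; apply: continuity_pt_mult.
  by apply: continuity_pt_const => ? ?.
by apply: continuity_pt_invmx => //; apply/eqP; rewrite gt_eqF.
Qed.

Lemma pd_hodge1_zero (g : metric) (eta : Defs.form1) p i j k :
  (forall a b, continuous_at3 (fun q => g q a b) p) -> 0 < \det (g p) ->
  zero1 eta p -> (forall m, ex_pd i (eta m) p) ->
  pd i (hodge1 g eta j k) p = \sum_(m < 3) hodge_coef g j k m p * pd i (eta m) p.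
Proof.
move=> Gc det_gt0 eta0 ex_eta; apply: is_derive_unique.
apply: (is_derive_ext
  (fun t => \sum_(m < 3) hodge_coef g j k m (move p i t) * eta m (move p i t))) => [t|].
  by rewrite hodge1E.
apply: is_derive_sum => m.
have := @is_derive_mult_vanishing (fun t => hodge_coef g j k m (move p i t))
  (fun t => eta m (move p i t)) 0 (pd i (eta m) p).
rewrite move0; apply.
- apply: (@continuity_pt_hodge_coef g j k m (move p i)); last by rewrite move0.
  by move=> a b; apply: continuity_pt_move (Gc a b).
- exact: Derive_correct (ex_eta m).
- exact: eta0.
Qed.

(* The dx0 /\ dx1 /\ dx2 coefficient of the exterior derivative of om. *)
Definition dform2 (om : Defs.form2) (p : pt) : R :=
  (pd i0 (om i1 i2) p + pd i1 (om i2 i0) p + pd i2 (om i0 i1) p)%R.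

Definition jacobian (eta : Defs.form1) (p : pt) : 'M[R]_3 := \matrix_(m, l) pd l (eta m) p.

Lemma dform2_hodge1_zero (g : metric) (eta : Defs.form1) p :
  (forall a b, continuous_at3 (fun q => g q a b) p) -> 0 < \det (g p) ->
  zero1 eta p -> (forall i m, ex_pd i (eta m) p) ->
  dform2 (hodge1 g eta) p = sqrt (\det (g p)) * \tr (invmx (g p) *m jacobian eta p).
Proof.
move=> Gc det_gt0 eta0 ex_eta.
rewrite /dform2 !pd_hodge1_zero // /hodge_coef /mxtrace.
rewrite !sum_ord3 !mxE !sum_ord3 !mxE /levi /=.
rewrite !R0E !R1E; ring.
Qed.
End HodgeStar.

Lemma pd_ext_ball0 r f h i : 0 < r -> (forall p, ball0 r p -> f p = h p) ->
  pd i f origin = pd i h origin.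
Proof.
move=> r0 fh; apply: Derive_ext_loc; have r2 : 0 < r / 2 by lra.
exists (mkposreal _ r2) => t /=; rewrite /ball /= /AbsRing_ball /abs /minus /=.
rewrite opp_zero plus_zero_r => ht; apply: fh; apply/RltP.
have := dist3_move origin i t; lra.
Qed.

Lemma dform2_ext_ball0 r (om om' : Defs.form2) : 0 < r ->
  (forall p, ball0 r p -> forall j k, om j k p = om' j k p) ->
  dform2 om origin = dform2 om' origin.
Proof.
by move=> r0 E; rewrite /dform2 !(pd_ext_ball0 _ r0 (fun p Bp => E p Bp _ _)).
Qed.

Lemma pd_dform1 (eta : Defs.form1) i j k p :
  ex_pd i (pd j (eta k)) p -> ex_pd i (pd k (eta j)) p ->
  pd i (dform1 eta j k) p = pd i (pd j (eta k)) p - pd i (pd k (eta j)) p.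
Proof. by move=> ex1 ex2; rewrite /pd /dform1 Derive_minus. Qed.

Lemma dform2_dform1_origin r (eta : Defs.form1) : 0 < r ->
  (forall m, smooth_on_ball r (eta m)) -> dform2 (dform1 eta) origin = 0.
Proof.
move=> r0 Seta; have B := ball0_origin r0.
rewrite /dform2 !pd_dform1; try exact: (Seta _ [:: _] origin B).2.
rewrite (pd_pdC_origin i1 i0 r0 (Seta i2)) (pd_pdC_origin i2 i0 r0 (Seta i1)).
rewrite (pd_pdC_origin i2 i1 r0 (Seta i0)) -!RplusE; ring.
Qed.

Lemma pd_add1 (a b : Defs.form1) i m p : ex_pd i (a m) p -> ex_pd i (b m) p ->
  pd i (add1 a b m) p = pd i (a m) p + pd i (b m) p.
Proof. by move=> exa exb; rewrite /pd /add1 Derive_plus. Qed.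

Lemma hessian0_sym r phi : 0 < r -> smooth_on_ball r phi ->
  ((hessian0 phi)^T = hessian0 phi)%R.
Proof.
by move=> r0 Sphi; apply/matrixP => a b; rewrite !mxE; apply: (pd_pdC_origin _ _ r0 Sphi).
Qed.

Lemma jacobian_add1_exact1 r1 r2 phi (nu : Defs.form1) :
  0 < r1 -> smooth_on_ball r1 phi -> 0 < r2 -> (forall m, smooth_on_ball r2 (nu m)) ->
  (forall m i, pd i (nu m) origin = 0) ->
  jacobian (add1 (exact1 phi) nu) origin = ((hessian0 phi)^T)%R.
Proof.
move=> r1_0 Sphi r2_0 Snu dnu0.
apply/matrixP => m l; rewrite !mxE pd_add1 ?dnu0 ?Rplus_0_r //.
- exact: (Sphi [:: m] origin (ball0_origin r1_0)).2.
- exact: (Snu m [::] origin (ball0_origin r2_0)).2.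
Qed.

Theorem proposition4p16 (phi : pt -> R) :
  smooth_germ phi ->
  isolated_critical_point0 phi ->
  corank0 phi = 2%N ->
  ~ beltrami_singularity phi.
Proof.
move=> [rf [/RltP rf0 Sphi]] [crit _] corank2
  [nu [g [r [/RltP r0 [Snu [nu0 [dnu0 [[Gs Gm] [[Seta _] Hod]]]]]]]]].
set eta := add1 (exact1 phi) nu in Seta Hod.
have B := ball0_origin r0.
have rkH : \rank (hessian0 phi) = 1%N.
  move: corank2 (rank_leq_row (hessian0 phi)); rewrite /corank0.
  by case: (\rank _) => [|[|[|[|?]]]].
have HT := hessian0_sym rf0 Sphi.
have Gpos : posdefmx (g origin) := (Gm origin B).2.
have : dform2 (hodge1 g eta) origin = 0.
  by rewrite (dform2_ext_ball0 r0 Hod) (dform2_dform1_origin r0 Seta).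
rewrite dform2_hodge1_zero ?posdefmx_det_gt0 //.
- rewrite (jacobian_add1_exact1 rf0 Sphi r0 Snu dnu0) HT.
  apply/eqP; rewrite mulf_eq0 negb_or (tr_invmx_rank1_neq0 Gpos HT rkH) andbT.
  by apply/eqP/Rgt_not_eq/sqrt_lt_R0/RltP/posdefmx_det_gt0.
- by move=> a b; exact: (Gs a b [::] origin B).1.
- by move=> m; rewrite /eta /add1 /exact1 crit nu0 addr0.
- by move=> i m; exact: (Seta m [::] origin B).2.
Qed.
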